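(* Let $k\ge3$. Let $C$ be a cycle of length $2k$ and $P$ a path of length $2k$ such that $E(C)\cap E(P)=\emptyset$ and $V(C)\cap V(P)\ne\emptyset$. If $H:=C\cup P$ has girth at least $2k-2$, then $H$ can be decomposed into two paths whose lengths lie in $\{2k-1,2k,2k+1\}$.
   Context: Graphs are finite and simple; length = number of edges; girth = length of a shortest cycle. A decomposition of a graph is a set of subgraphs whose edge sets partition its edge set. *)

(* Graphs are given implicitly by edge sets of vertex sequences
   over an arbitrary eqType of vertices. *)
From mathcomp Require Import all_boot.
Set Implicit Arguments. Unset Strict Implicit. Unset Printing Implicit Defensive.

Section Graphs.
Variable T : eqType.

Definition sedge (a b x y : T) : bool :=
  ((a == x) && (b == y)) || ((a == y) && (b == x)).

Definition path_edge (p : seq T) (x y : T) : bool :=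
  has (fun ab => sedge ab.1 ab.2 x y) (zip p (behead p)).

Definition cycle_edge (c : seq T) (x y : T) : bool :=
  if c is a :: _ then path_edge (rcons c a) x y else false.

Definition is_path (p : seq T) (n : nat) : bool := uniq p && (size p == n.+1).

Definition is_cycle (c : seq T) (n : nat) : bool :=
  uniq c && (size c == n) && (3 <= n).

End Graphs.

From mathcomp Require Import all_boot zify.
Set Implicit Arguments. Unset Strict Implicit. Unset Printing Implicit Defensive.

(* Write P = pre ++ v :: suf, where v is the first vertex of P on C, P being read from the end
   with the shorter C-free initial segment pre, and let C = v :: a ++ w :: b.  If a ++ [w]
   avoids P, the paths pre ++ v :: rev b ++ [w] and w :: rev a ++ v :: suf decompose C ∪ P,
   with lengths in [2k-1, 2k+1] as soon as |a| <= |pre| <= |a| + 2.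
   For |pre| >= 2 take |a| = |pre| - 2: a vertex of P among the first |pre| - 1 vertices of C
   after v would close, with the segment of P from v to it, a cycle shorter than 2k - 2.
   For |pre| <= 1 take a = [], after reversing C if needed; this fails only when both
   C-neighbours of v lie on P, and then the two cycles they close with segments of P need
   4k - 9 interior vertices of P out of at most 2k - 2, impossible unless k = 3.  That last
   case is a finite configuration space, checked by computation on an integer coding of the
   vertices of C ∪ P. *)

Section PathEdges.
Variable T : eqType.
Implicit Types (s t : seq T) (a b u v w x y : T).

Lemma sedge_refl a b : sedge a b a b.
Proof. by rewrite /sedge !eqxx. Qed.

Lemma sedgeC a b x y : sedge a b x y = sedge a b y x.
Proof. by rewrite /sedge orbC. Qed.

Lemma sedge_sym a b x y : sedge a b x y = sedge x y a b.
Proof.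
rewrite /sedge (eq_sym x a) (eq_sym y b) (eq_sym x b) (eq_sym y a).
by case: (a == x) (b == y) (a == y) (b == x) => [] [] [] [].
Qed.

Lemma sedge_rel (E : rel T) a b x y : symmetric E -> sedge a b x y -> E a b -> E x y.
Proof. by move=> E_sym /orP[] /andP[/eqP-> /eqP->] //; rewrite E_sym. Qed.

Lemma sedge_mem a b x y : sedge a b x y -> (x == a) || (x == b).
Proof. by case/orP=> /andP[/eqP-> /eqP->]; rewrite eqxx ?orbT. Qed.

Lemma path_edge_cons a b s x y :
  path_edge [:: a, b & s] x y = sedge a b x y || path_edge (b :: s) x y.
Proof. by []. Qed.

Lemma path_edge_sym s : symmetric (path_edge s).
Proof. by move=> x y; apply: eq_has => e; rewrite sedgeC. Qed.

Lemma path_edge_cat a s t x y :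
  path_edge (a :: s ++ t) x y = path_edge (a :: s) x y || path_edge (last a s :: t) x y.
Proof.
elim: s a => [|b s IHs] a /=; first by case: t.
by rewrite path_edge_cons IHs path_edge_cons orbA.
Qed.

Lemma path_edge_rcons a s b x y :
  path_edge (a :: rcons s b) x y = path_edge (a :: s) x y || sedge (last a s) b x y.
Proof. by rewrite -cats1 path_edge_cat path_edge_cons orbF. Qed.

Lemma path_edge_split s v t x y :
  path_edge (s ++ v :: t) x y = path_edge (rcons s v) x y || path_edge (v :: t) x y.
Proof.
by case: s => [|a s] //; rewrite cat_cons path_edge_cat rcons_cons path_edge_rcons orbA.
Qed.

Lemma path_edge_rev s x y : path_edge (rev s) x y = path_edge s x y.
Proof.
elim: s => [|a [|b s] IHs] //; rewrite rev_cons path_edge_cons -IHs.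
case E: (rev (b :: s)) => [|c t]; first by move: E; rewrite rev_cons; case: (rev s).
have <- : last c t = b by rewrite -(last_cons a) -E rev_cons last_rcons.
by rewrite path_edge_rcons -E orbC sedge_sym sedgeC sedge_sym.
Qed.

Lemma path_edge_flip a s b x y :
  path_edge (a :: rcons (rev s) b) x y = path_edge (b :: rcons s a) x y.
Proof. by rewrite -path_edge_rev rev_cons rev_rcons revK. Qed.

Lemma path_edge_infix s t x y : infix s t -> path_edge s x y -> path_edge t x y.
Proof.
case/infixP=> s1 [s2 ->]; case: s => [|a s] // e_xy.
elim: s1 => [|b s1 IHs1]; first by rewrite /= path_edge_cat e_xy.
by case: s1 IHs1 => [|c s1] IH; rewrite /= path_edge_cons IH orbT.
Qed.

Lemma path_edge_mem s x y : path_edge s x y -> (x \in s) && (y \in s).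
Proof.
elim: s => [|a [|b s] IHs] //; rewrite path_edge_cons => /orP[e_xy | /IHs].
  move: (sedge_mem e_xy) (sedge_mem (etrans (sedgeC _ _ _ _) e_xy)); rewrite !inE.
  by case/orP=> -> /orP[] ->; rewrite ?orbT.
by case/andP=> xs ys; rewrite in_cons xs orbT in_cons ys orbT.
Qed.

Lemma path_edge_neq s x y : uniq s -> path_edge s x y -> x != y.
Proof.
elim: s => [|a [|b s] IHs] //= /andP[a_bs bs_uniq]; rewrite path_edge_cons.
case/orP=> [|/IHs]; last exact.
rewrite inE negb_or in a_bs; case/andP: a_bs => a_b _.
by case/orP=> /andP[/eqP<- /eqP<-]; rewrite // eq_sym.
Qed.

Lemma path_edge_head a s y : a \notin s -> path_edge (a :: s) a y -> y = head a s.
Proof.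
case: s => [|b s] //; rewrite inE negb_or path_edge_cons => /andP[a_b a_s].
case/orP=> [|/path_edge_mem/andP[]]; last by rewrite inE (negbTE a_s) (negbTE a_b).
rewrite /sedge eqxx /= => /orP[/eqP-> // | /andP[_ /eqP ba]].
by rewrite ba eqxx in a_b.
Qed.

Lemma path_edge_meet s t v x y :
  uniq s -> {in s, forall z, z \in t -> z = v} -> ~~ (path_edge s x y && path_edge t x y).
Proof.
move=> s_uniq st_v; apply/negP=> /andP[e_s e_t].
case/andP: (path_edge_mem e_s) (path_edge_mem e_t) => xs ys /andP[xt yt].
by move: (path_edge_neq s_uniq e_s); rewrite (st_v x xs xt) (st_v y ys yt) eqxx.
Qed.

Lemma path_edge_split_disjoint s v t x y :
  uniq (s ++ v :: t) -> ~~ (path_edge (rcons s v) x y && path_edge (v :: t) x y).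
Proof.
rewrite cat_uniq => /and3P[s_uniq /hasPn vt_s /andP[vt t_uniq]].
apply: (path_edge_meet (v := v)); first by rewrite rcons_uniq vt_s ?mem_head.
move=> z; rewrite mem_rcons !inE => /orP[/eqP // | zs] /orP[/eqP // | zt].
by move: (vt_s z); rewrite inE zt orbT zs => /(_ isT).
Qed.

Lemma cycle_edge_cons a s x y : cycle_edge (a :: s) x y = path_edge (a :: rcons s a) x y.
Proof. by []. Qed.

Lemma cycle_edge_sym s : symmetric (cycle_edge s).
Proof. by case: s => // a s x y; rewrite !cycle_edge_cons path_edge_sym. Qed.

Lemma path_edge_cycle s x y : path_edge s x y -> cycle_edge s x y.
Proof. by case: s => // a s e_xy; rewrite cycle_edge_cons path_edge_rcons e_xy. Qed.

Lemma cycle_edge_mem s x y : cycle_edge s x y -> (x \in s) && (y \in s).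
Proof.
by case: s => // a s /path_edge_mem; rewrite !in_cons !mem_rcons !in_cons !orbA !orbb.
Qed.

Lemma cycle_edge_neq s x y : uniq s -> 1 < size s -> cycle_edge s x y -> x != y.
Proof.
case: s => [|a s] // s_uniq s_gt1; rewrite cycle_edge_cons path_edge_rcons.
case/orP=> [/(path_edge_neq s_uniq) // |].
have a_last : last a s != a.
  case: s s_uniq s_gt1 => // b s /andP[a_bs _] _ /=.
  by apply: contraNneq a_bs => <-; apply: mem_last.
by case/orP=> /andP[/eqP<- /eqP<-] //; rewrite eq_sym.
Qed.

Lemma cycle_edge_arcs v s w t x y :
  cycle_edge (v :: s ++ w :: t) x y =
  path_edge (v :: rcons s w) x y || path_edge (w :: rcons t v) x y.
Proof. by rewrite cycle_edge_cons rcons_cat rcons_cons -cat_cons path_edge_split. Qed.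

Lemma cycle_arcs_disjoint v s w t x y : uniq (v :: s ++ w :: t) -> t != [::] ->
  ~~ (path_edge (v :: rcons s w) x y && path_edge (w :: rcons t v) x y).
Proof.
move=> c_uniq t0; have := c_uniq.
rewrite cons_uniq mem_cat inE !negb_or => /andP[/and3P[vs vw vt]].
rewrite cat_uniq cons_uniq => /and3P[_ /hasPn w_t_s /andP[wt _]].
have vw_only z : z \in v :: rcons s w -> z \in w :: rcons t v -> (z == v) || (z == w).
  rewrite !inE !mem_rcons !inE => /orP[-> // | /orP[-> | zs]]; first by rewrite orbT.
  case/orP=> [/eqP zw | /orP[-> // | zt]]; first by rewrite zw eqxx orbT.
  by move: (w_t_s z); rewrite inE zt orbT zs => /(_ isT).
apply/negP=> /andP[e_s e_t].
have wv_edge : path_edge (w :: rcons t v) w v.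
  have arc_uniq : uniq (v :: rcons s w).
    by apply: (infix_uniq _ c_uniq); rewrite -cat_rcons -cat_cons prefix_infix.
  case/andP: (path_edge_mem e_s) (path_edge_mem e_t) => xs ys /andP[xt yt].
  move: e_t (path_edge_neq arc_uniq e_s).
  by case/orP: (vw_only x xs xt) (vw_only y ys yt) => /eqP-> /orP[]/eqP->;
    rewrite ?eqxx // path_edge_sym.
move/path_edge_head: wv_edge; rewrite mem_rcons inE negb_or eq_sym vw wt => /(_ isT).
case: t t0 vt {c_uniq w_t_s vw_only e_t wt} => // t1 t _.
by rewrite inE => /norP[/negP vt1 _] /= /eqP.
Qed.

Lemma cycle_edge_catC s t x y : cycle_edge (s ++ t) x y = cycle_edge (t ++ s) x y.
Proof.
case: s => [|a s]; first by rewrite cats0.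
case: t => [|b t]; first by rewrite cats0.
by rewrite !cat_cons !cycle_edge_arcs orbC.
Qed.

Lemma cycle_edge_rot n s x y : cycle_edge (rot n s) x y = cycle_edge s x y.
Proof. by rewrite /rot cycle_edge_catC cat_take_drop. Qed.

Lemma cycle_edge_rev s x y : cycle_edge (rev s) x y = cycle_edge s x y.
Proof.
case: s => [|a s] //; rewrite rev_cons -cats1 cycle_edge_catC cat1s !cycle_edge_cons.
by rewrite -[in RHS]path_edge_rev rev_cons rev_rcons rcons_cons.
Qed.

Lemma cycle_edge_rev_tail v s x y : cycle_edge (v :: rev s) x y = cycle_edge (v :: s) x y.
Proof. by rewrite -cycle_edge_rev rev_cons revK -cats1 cycle_edge_catC. Qed.

Lemma find_le_cat (a : pred T) s u t : a u -> find a (s ++ u :: t) <= size s.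
Proof.
move=> au; rewrite find_cat; case: ifP => [s_a | _]; first by rewrite ltnW // -has_find.
by rewrite /= au addn0.
Qed.

Lemma split_two s x y : x \in s -> y \in s -> x != y ->
  exists m1 m2 post, s = m1 ++ x :: m2 ++ y :: post \/ s = m1 ++ y :: m2 ++ x :: post.
Proof.
case/splitPr=> s1 s2; rewrite mem_cat inE => /or3P[ys1 | /eqP-> | ys2]; last 2 first.
- by rewrite eqxx.
- by case/splitPr: ys2 => m2 post _; exists s1, m2, post; left.
by case/splitPr: ys1 => m1 m2 _; exists m1, m2, s2; right; rewrite -catA.
Qed.

End PathEdges.

Lemma path_edge_map_in (T rT : eqType) (f : T -> rT) (D : pred T) s x y :
  {in D &, injective f} -> {subset s <= D} -> x \in D -> y \in D ->
  path_edge (map f s) (f x) (f y) = path_edge s x y.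
Proof.
move=> f_inj sD xD yD; elim: s sD => [|a [|b s] IHs] // sD.
have [aD bD] : a \in D /\ b \in D by split; apply: sD; rewrite !inE eqxx ?orbT.
rewrite /= !path_edge_cons -IHs => [|z zs]; last by apply: sD; rewrite inE zs orbT.
by rewrite /sedge !(inj_in_eq f_inj).
Qed.

Lemma cycle_edge_map_in (T rT : eqType) (f : T -> rT) (D : pred T) s x y :
  {in D &, injective f} -> {subset s <= D} -> x \in D -> y \in D ->
  cycle_edge (map f s) (f x) (f y) = cycle_edge s x y.
Proof.
case: s => [|a s] // f_inj sD xD yD; rewrite map_cons !cycle_edge_cons -map_rcons -map_cons.
apply: (path_edge_map_in f_inj) => // z zs; apply: sD.
by move: zs; rewrite in_cons mem_rcons in_cons orbA orbb.
Qed.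

Section Decompositions.
Variable T : eqType.
Implicit Types (c p s pre suf a b : seq T) (k : nat) (v w x y : T).

Definition union_edge c p x y := cycle_edge c x y || path_edge p x y.

Lemma union_edge_sym c p : symmetric (union_edge c p).
Proof. by move=> x y; rewrite /union_edge cycle_edge_sym path_edge_sym. Qed.

Definition girth_at_least (E : rel T) (g : nat) :=
  forall d m, is_cycle d m -> (forall x y, cycle_edge d x y -> E x y) -> g <= m.

Definition admissible k c p :=
  [/\ is_cycle c (2 * k), is_path p (2 * k),
      forall x y, ~~ (cycle_edge c x y && path_edge p x y) &
      girth_at_least (union_edge c p) (2 * k - 2)].

Definition decomposable k c p := exists (q1 q2 : seq T) (l1 l2 : nat),
  [/\ is_path q1 l1 /\ is_path q2 l2,
      l1 \in [:: 2 * k - 1; 2 * k; 2 * k + 1],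
      l2 \in [:: 2 * k - 1; 2 * k; 2 * k + 1],
      forall x y, union_edge c p x y = path_edge q1 x y || path_edge q2 x y &
      forall x y, ~~ (path_edge q1 x y && path_edge q2 x y)].

Lemma admissible_cycle_eq k c c' p : perm_eq c c' -> cycle_edge c =2 cycle_edge c' ->
  admissible k c p -> admissible k c' p.
Proof.
move=> cc' E [c_cycle p_path CP_disj girth]; split=> // [|x y|d m d_cycle d_H].
- by rewrite /is_cycle -(perm_uniq cc') -(perm_size cc').
- by rewrite -E.
- by apply: girth d_cycle _ => x y /d_H; rewrite /union_edge E.
Qed.

Lemma decomposable_cycle_eq k c c' p : cycle_edge c =2 cycle_edge c' ->
  decomposable k c' p -> decomposable k c p.
Proof.
move=> E [q1 [q2 [l1 [l2 [qs l1k l2k q_union q_disj]]]]].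
by exists q1, q2, l1, l2; split=> // x y; rewrite /union_edge E; apply: q_union.
Qed.

Lemma admissible_rev k c p : admissible k c p -> admissible k c (rev p).
Proof.
case=> c_cycle p_path CP_disj girth; split=> [||x y|d m d_cycle d_H] //.
- by rewrite /is_path rev_uniq size_rev.
- by rewrite path_edge_rev.
- by apply: girth d_cycle _ => x y /d_H; rewrite /union_edge path_edge_rev.
Qed.

Lemma decomposable_rev k c p : decomposable k c (rev p) -> decomposable k c p.
Proof.
move=> [q1 [q2 [l1 [l2 [qs l1k l2k q_union q_disj]]]]].
by exists q1, q2, l1, l2; split=> // x y; rewrite -q_union /union_edge path_edge_rev.
Qed.

Lemma mem_lengths k l : 0 < k -> 2 * k - 1 <= l <= 2 * k + 1 ->
  l \in [:: 2 * k - 1; 2 * k; 2 * k + 1].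
Proof.
move=> k_gt0 /andP[lo hi]; rewrite !inE.
have [->|[->|->]] : l = 2 * k - 1 \/ l = 2 * k \/ l = 2 * k + 1 by lia.
all: by rewrite eqxx ?orbT.
Qed.

Lemma splice_edges v a w b pre suf x y :
  union_edge (v :: a ++ w :: b) (pre ++ v :: suf) x y =
  path_edge (pre ++ v :: rcons (rev b) w) x y || path_edge (w :: rev a ++ v :: suf) x y.
Proof.
rewrite /union_edge cycle_edge_arcs -cat_cons !path_edge_split rcons_cons !path_edge_flip.
by case: (path_edge (v :: rcons a w) x y); case: (path_edge (w :: rcons b v) x y);
   case: (path_edge (rcons pre v) x y).
Qed.

Lemma splice_disjoint v a w b pre suf x y :
  uniq (v :: a ++ w :: b) -> uniq (pre ++ v :: suf) -> b != [::] ->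
  ~~ (cycle_edge (v :: a ++ w :: b) x y && path_edge (pre ++ v :: suf) x y) ->
  ~~ (path_edge (pre ++ v :: rcons (rev b) w) x y && path_edge (w :: rev a ++ v :: suf) x y).
Proof.
move=> c_uniq p_uniq b0 CP_disj.
rewrite -cat_cons !path_edge_split rcons_cons !path_edge_flip.
move: CP_disj (cycle_arcs_disjoint x y c_uniq b0) (path_edge_split_disjoint x y p_uniq).
rewrite cycle_edge_arcs path_edge_split.
by case: (path_edge (v :: rcons a w) x y); case: (path_edge (w :: rcons b v) x y);
   case: (path_edge (rcons pre v) x y); case: (path_edge (v :: suf) x y).
Qed.

Lemma decomposable_splice k v a w b pre suf :
  admissible k (v :: a ++ w :: b) (pre ++ v :: suf) ->
  ~~ has (mem (v :: a ++ w :: b)) pre -> ~~ has (mem (pre ++ v :: suf)) (rcons a w) ->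
  b != [::] -> size a <= size pre <= (size a).+2 ->
  decomposable k (v :: a ++ w :: b) (pre ++ v :: suf).
Proof.
set c := v :: _; set p := pre ++ _.
move=> [/andP[/andP[c_uniq /eqP c_size] k_gt1] /andP[p_uniq /eqP p_size] CP_disj _].
move=> pre_c aw_p b0 pre_a.
have aw_c : infix (rcons a w) c by apply/infixP; exists [:: v], b; rewrite cat_rcons.
have wbv_c : infix (w :: rcons b v) (rot (size a).+1 c).
  by apply/infixP; exists [::], a; rewrite /c -cat_cons (rot_size_cat (v :: a)) -cat_rcons.
have wbv_uniq : uniq (w :: rcons b v) by apply: infix_uniq wbv_c _; rewrite rot_uniq.
have aw_uniq : uniq (rcons a w) := infix_uniq aw_c c_uniq.
have [pre_uniq vsuf_uniq] : uniq pre /\ uniq (v :: suf).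
  by move: p_uniq; rewrite cat_uniq => /and3P[-> _ ->].
have k_gt0 : 0 < k by case: k k_gt1 {c_size p_size}.
exists (pre ++ v :: rcons (rev b) w), (w :: rev a ++ v :: suf),
  (size pre + size b + 1), (size a + size suf + 1).
split; first split.
- apply/andP; split; last by rewrite size_cat /= size_rcons size_rev addn1 !addnS.
  rewrite -rcons_cons -rev_rcons -rev_cons cat_uniq pre_uniq rev_uniq wbv_uniq andbT.
  rewrite has_rev has_sym; apply: contra pre_c; apply: sub_has => z /(mem_infix wbv_c).
  by rewrite mem_rot.
- apply/andP; split; last by rewrite /= size_cat size_rev /= addn1 !addnS.
  rewrite -cat_cons -rev_rcons cat_uniq rev_uniq aw_uniq vsuf_uniq andbT.
  rewrite (eq_has (mem_rev _)) has_sym; apply: contra aw_p; apply: sub_has => z.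
  exact: mem_infix (suffix_infix pre _) z.
- apply: mem_lengths => //; move: c_size p_size pre_a; rewrite /= !size_cat /=.
  by clear; lia.
- apply: mem_lengths => //; move: c_size p_size pre_a; rewrite /= !size_cat /=.
  by clear; lia.
- exact: splice_edges.
- by move=> x y; apply: splice_disjoint.
Qed.

Lemma girth_two_paths (E : rel T) g v w s t :
  girth_at_least E g -> uniq (v :: s ++ w :: rev t) -> 0 < size s + size t ->
  (forall x y, path_edge (v :: rcons s w) x y -> E x y) ->
  (forall x y, path_edge (v :: rcons t w) x y -> E x y) ->
  g <= size s + size t + 2.
Proof.
move=> girth d_uniq st_gt0 Es Et.
have -> : size s + size t + 2 = size (v :: s ++ w :: rev t).
  by rewrite /= size_cat /= size_rev addn2 addnS.
apply: (girth (v :: s ++ w :: rev t)).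
  by rewrite /is_cycle d_uniq eqxx /= size_cat /= size_rev; lia.
by move=> x y; rewrite cycle_edge_arcs path_edge_flip => /orP[/Es | /Et].
Qed.

Lemma ear_length k c p v w s t : admissible k c p -> uniq (v :: s ++ w :: rev t) ->
  (forall x y, path_edge (v :: rcons s w) x y -> path_edge p x y) ->
  (forall x y, path_edge (v :: rcons t w) x y -> cycle_edge c x y) ->
  2 * k - 2 <= size s + size t + 2.
Proof.
move=> [_ _ CP_disj girth] d_uniq Ps Ct.
case: (posnP (size s + size t)) => [/eqP | st_gt0].
  rewrite addn_eq0 !size_eq0 => /andP[/eqP s0 /eqP t0]; subst s t.
  by move: (CP_disj v w); rewrite Ct ?Ps //= path_edge_cons sedge_refl.
apply: girth_two_paths girth d_uniq st_gt0 _ _ => x y; rewrite /union_edge.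
- by move/Ps ->; rewrite orbT.
- by move/Ct ->.
Qed.

Lemma decomposable_next_off_path k v w b pre suf :
  admissible k (v :: w :: b) (pre ++ v :: suf) -> ~~ has (mem (v :: w :: b)) pre ->
  size pre <= 1 -> w \notin pre ++ v :: suf ->
  decomposable k (v :: w :: b) (pre ++ v :: suf).
Proof.
move=> adm pre_c pre1 w_p; apply: (decomposable_splice (a := [::])) => //=.
- by rewrite orbF.
- case: adm => /andP[/andP[_ /eqP c_size] k_gt1] _ _ _; apply/eqP => b0.
  by move: k_gt1; rewrite -c_size b0.
- exact: leq_trans pre1 _.
Qed.

(* The segments of P from v to x and from x to y close cycles with the C-edges vx and xv, vy;
   by the girth bound they have at least 2k - 4 and 2k - 5 interior vertices. *)
Lemma two_neighbours_on_path_absurd k c pre v m1 x m2 y post :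
  3 < k -> admissible k c (pre ++ v :: m1 ++ x :: m2 ++ y :: post) ->
  cycle_edge c v x -> cycle_edge c v y -> False.
Proof.
set p := pre ++ _ => k_gt3 adm vx vy.
have [_ /andP[p_uniq /eqP p_size] _ _] := adm.
have seg1 : infix (v :: rcons m1 x) p.
  by apply/infixP; exists pre, (m2 ++ y :: post); rewrite /p /= cat_rcons.
have seg2 : infix (x :: rcons m2 y) p.
  by apply/infixP; exists (pre ++ v :: m1), post; rewrite /p -catA /= cat_rcons.
have v_seg2 : v \notin x :: rcons m2 y.
  have : v \notin m1 ++ x :: m2 ++ y :: post.
    by move: p_uniq; rewrite /p cat_uniq => /and3P[_ _ /andP[]].
  by apply: contra; apply: mem_infix; apply/infixP; exists m1, post; rewrite /= cat_rcons.
have ear1 : 2 * k - 2 <= size m1 + size (@nil T) + 2.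
  apply: (ear_length adm (v := v) (w := x)) => [|z1 z2|z1 z2].
  - by rewrite cats1 (infix_uniq seg1 p_uniq).
  - exact: path_edge_infix seg1.
  - by rewrite /= path_edge_cons orbF => /sedge_rel; apply=> //; apply: cycle_edge_sym.
have ear2 : 2 * k - 2 <= size m2 + size [:: v] + 2.
  apply: (ear_length adm (v := x) (w := y)) => [|z1 z2|z1 z2].
  - rewrite (_ : x :: _ = rcons (x :: rcons m2 y) v); last first.
      by rewrite rcons_cons -cats1 cat_rcons.
    by rewrite rcons_uniq v_seg2 (infix_uniq seg2 p_uniq).
  - exact: path_edge_infix seg2.
  - rewrite /= !path_edge_cons orbF => /orP[] /sedge_rel; apply=> //; try apply: cycle_edge_sym.
    by rewrite cycle_edge_sym.
move: p_size ear1 ear2; rewrite /p size_cat /= size_cat /= size_cat /=.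
by clear -k_gt3; lia.
Qed.

Lemma cycle_neighbours_not_both_on_path k v w b pre suf :
  3 < k -> admissible k (v :: w :: b) (pre ++ v :: suf) -> ~~ has (mem (v :: w :: b)) pre ->
  w \in pre ++ v :: suf -> last w b \notin pre ++ v :: suf.
Proof.
set p := pre ++ _; set z := last w b => k_gt3 adm pre_c wp; apply/negP=> zp.
have [/andP[/andP[c_uniq /eqP c_size] _] _ _ _] := adm.
have in_suf u : u \in w :: b -> u \in p -> u \in suf.
  move=> u_cs; rewrite /p mem_cat inE => /or3P[u_pre | /eqP uv | //].
    by case/negP: (hasPn pre_c u u_pre); apply: (mem_behead (s := v :: w :: b)).
  by move: c_uniq; rewrite cons_uniq -uv u_cs.
have b0 : b != [::] by apply/eqP=> b0; move: c_size; rewrite b0 /=; clear -k_gt3; lia.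
have zb : z \in b by rewrite /z; move: b0; case: (b) => //= b1 b' _; apply: mem_last.
have wz : w != z by apply: contraNneq (andP (andP c_uniq).2).1 => ->.
have vw : cycle_edge (v :: w :: b) v w by rewrite cycle_edge_cons path_edge_cons sedge_refl.
have vz : cycle_edge (v :: w :: b) v z.
  by rewrite cycle_edge_sym cycle_edge_cons path_edge_rcons sedge_refl orbT.
have zs : z \in w :: b by rewrite inE zb orbT.
have [m1 [m2 [post [] suf_eq]]] := split_two (in_suf w (mem_head _ _) wp) (in_suf z zs zp) wz.
- apply: (two_neighbours_on_path_absurd (pre := pre) (m1 := m1) (m2 := m2) (post := post)
    k_gt3 _ vw vz).
  by rewrite -suf_eq.
- apply: (two_neighbours_on_path_absurd (pre := pre) (m1 := m1) (m2 := m2) (post := post)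
    k_gt3 _ vz vw).
  by rewrite -suf_eq.
Qed.

Lemma orientation_bound (a : pred T) n s u t : n <= find a (rev (s ++ u :: t)) -> a u ->
  n <= size t.
Proof.
move=> n_le au; apply: leq_trans n_le _.
by rewrite rev_cat rev_cons -cats1 -catA -(size_rev t) find_le_cat.
Qed.

Lemma cycle_start_off_path k v cs pre suf :
  admissible k (v :: cs) (pre ++ v :: suf) -> ~~ has (mem (v :: cs)) pre ->
  size pre <= find (mem (v :: cs)) (rev (pre ++ v :: suf)) -> 1 < size pre ->
  ~~ has (mem (pre ++ v :: suf)) (take (size pre).-1 cs).
Proof.
set p := pre ++ _; set r := size pre => adm pre_c orient r_gt1.
have [/andP[/andP[c_uniq _] _] /andP[p_uniq /eqP p_size] _ _] := adm.
have [v_cs cs_uniq] : v \notin cs /\ uniq cs by case/andP: c_uniq.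
apply/negP=> hit; have cs_p : has (mem p) cs.
  by case/hasP: hit => z /mem_take zcs zp; apply/hasP; exists z.
move: hit; rewrite has_take // => D_lt; set D := find _ cs in D_lt.
set w := nth v cs D.
have D_cs : D < size cs by rewrite -has_find.
have wcs : w \in cs := mem_nth v D_cs.
have w_suf : w \in suf.
  have : w \in p := nth_find v cs_p.
  rewrite /p mem_cat inE => /or3P[w_pre | /eqP wv | //].
    by case/negP: (hasPn pre_c w w_pre); apply: (mem_behead (s := v :: cs)).
  by move: v_cs; rewrite -wv wcs.
have [mid [post suf_eq]] : exists mid post, suf = mid ++ w :: post.
  by case/splitPr: w_suf => mid post; exists mid, post.
have seg : infix (v :: rcons mid w) p.
  by apply/infixP; exists pre, post; rewrite /p suf_eq /= cat_rcons.
have arc : infix (v :: rcons (take D cs) w) (v :: cs).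
  by apply/infixP; exists [::], (drop D.+1 cs); rewrite -take_nth // /= cat_take_drop.
have arc_free : ~~ has (mem p) (take D cs) by rewrite has_take // ltnn.
have d_uniq : uniq (v :: mid ++ w :: rev (take D cs)).
  rewrite -cat_rcons -cat_cons cat_uniq (infix_uniq seg p_uniq) rev_uniq take_uniq //.
  by rewrite andbT has_rev; apply: contra arc_free; apply: sub_has => z /(mem_infix seg).
have := ear_length adm d_uniq (fun x y => path_edge_infix seg).
move=> /(_ (fun x y e => path_edge_cycle (path_edge_infix arc e))).
rewrite size_takel ?(ltnW D_cs) // => ear.
have p_eq : p = (pre ++ v :: mid) ++ w :: post by rewrite /p suf_eq -catA.
have w_c : w \in v :: cs by rewrite inE wcs orbT.
move: orient; rewrite p_eq => /orientation_bound/(_ w_c).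
by move: p_size; rewrite p_eq !size_cat /=; clear -ear D_lt r_gt1; lia.
Qed.

Lemma decomposable_long_prefix k v cs pre suf :
  admissible k (v :: cs) (pre ++ v :: suf) -> ~~ has (mem (v :: cs)) pre ->
  size pre <= find (mem (v :: cs)) (rev (pre ++ v :: suf)) -> 1 < size pre ->
  decomposable k (v :: cs) (pre ++ v :: suf).
Proof.
set p := pre ++ _; set r := size pre => adm pre_c orient r_gt1.
have head_free := cycle_start_off_path adm pre_c orient r_gt1.
have [/andP[/andP[_ /eqP c_size] _] /andP[_ /eqP p_size] _ _] := adm.
have cs_size : (size cs).+1 = 2 * k := c_size.
have r_le_k : r <= k.
  have := orientation_bound orient (mem_head v cs).
  by move: p_size; rewrite /p size_cat /=; clear; lia.
have cs_eq : cs = take r.-2 cs ++ nth v cs r.-2 :: drop (r.-2).+1 cs.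
  by rewrite -drop_nth ?cat_take_drop //; clear -cs_size r_le_k r_gt1; lia.
move: adm pre_c; rewrite cs_eq => adm pre_c; apply: decomposable_splice adm pre_c _ _ _.
- rewrite -take_nth; last by clear -cs_size r_le_k r_gt1; lia.
  by rewrite (_ : (r.-2).+1 = r.-1) //; clear -r_gt1; lia.
- by rewrite -size_eq0 size_drop; clear -cs_size r_le_k r_gt1; lia.
- by rewrite size_takel; [lia | clear -cs_size r_le_k r_gt1; lia].
Qed.

End Decompositions.

(* Codes of configurations for k = 3: a vertex of C gets its position 0..5 on C, a vertex off C
   at position j of P gets j + 6.  [all_codings P n s] checks [P] on every duplicate-free
   extension of [s] by [n] codes allowed at their positions. *)
Definition cycle_code : seq nat := iota 0 6.

Definition code_choices (j : nat) : seq nat := rcons cycle_code (j + 6).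

Fixpoint all_codings (P : pred (seq nat)) (n : nat) (s : seq nat) : bool :=
  if n is n'.+1 then
    all (fun x => if x \in s then true else all_codings P n' (rcons s x)) (code_choices (size s))
  else P s.

Lemma all_codingsP P n s t : all_codings P n s -> size t = n ->
  (forall i, i < n -> nth 0 t i \in code_choices (size s + i)) -> uniq (s ++ t) ->
  P (s ++ t).
Proof.
elim: n s t => [|n IHn] s [|x t] //; first by rewrite cats0.
move=> /allP all_x [t_size] t_choices st_uniq.
have x_choice : x \in code_choices (size s) by rewrite -[size s]addn0; apply: (t_choices 0).
have x_s : x \notin s.
  by move: st_uniq; rewrite cat_uniq => /and3P[_ /hasPn/(_ x (mem_head _ _))].
move: (all_x x x_choice); rewrite (negbTE x_s) -cat_rcons => /IHn; apply=> //.
- by move=> i i_n; rewrite size_rcons addSnnS; apply: (t_choices i.+1).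
- by rewrite cat_rcons.
Qed.

Definition adjacent (E : seq (nat * nat)) (x y : nat) : bool :=
  has (fun e => sedge e.1 e.2 x y) E.

Definition edge_list (s : seq nat) : seq (nat * nat) := zip s (behead s).

(* Tests are chained with [if] rather than [&&]: [vm_compute] evaluates both arguments of
   [andb], while only the chosen branch of an [if]. *)
Section CodeGraph.
Variables (E : seq (nat * nat)) (V : seq nat).

Definition triangle_free : bool :=
  all (fun x => all (fun y =>
    if adjacent E x y then all (fun z => ~~ (adjacent E y z && adjacent E z x)) V else true)
  V) V.

Definition is_decomposition (s1 s2 : seq nat) : bool :=
  if [&& size s1 \in [:: 6; 7; 8], size s2 \in [:: 6; 7; 8], uniq s1, uniq s2,
         all (mem V) s1 & all (mem V) s2]
  then all (fun x => all (fun y =>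
         (adjacent E x y == path_edge s1 x y || path_edge s2 x y) &&
         ~~ (path_edge s1 x y && path_edge s2 x y)) V) V
  else false.

(* An unverified search: the candidates are the simple paths from [x0] and, for each, the
   greedy walk through the remaining edges; only [is_decomposition] matters for soundness. *)
Fixpoint simple_paths (n : nat) (s : seq nat) : seq (seq nat) :=
  s :: if n is n'.+1 then
         flatten [seq simple_paths n' (y :: s) | y <- V & adjacent E (head 0 s) y && (y \notin s)]
       else [::].

Fixpoint greedy_walk (R : rel nat) (n : nat) (s : seq nat) : seq nat :=
  if n is n'.+1 then
    if [seq y <- V | R (head 0 s) y && (y \notin s)] is y :: _ then greedy_walk R n' (y :: s)
    else s
  else s.

Definition complement_path (s1 : seq nat) : seq nat :=
  let R x y := adjacent E x y && ~~ path_edge s1 x y in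
  greedy_walk R 8 [:: head 0 [seq x <- V | count (R x) V == 1]].

Definition has_decomposition (x0 : nat) : bool :=
  has (fun s1 => is_decomposition s1 (complement_path s1)) (simple_paths 7 [:: x0]).

End CodeGraph.

Definition edge_disjoint_on (V : seq nat) (E1 E2 : seq (nat * nat)) : bool :=
  all (fun x => all (fun y => ~~ (adjacent E1 x y && adjacent E2 x y)) V) V.

Definition exceptional_check (Ec Ep : seq (nat * nat)) (V : seq nat) (x0 : nat) : bool :=
  if edge_disjoint_on cycle_code Ec Ep then
    if triangle_free (Ec ++ Ep) V then has_decomposition (Ec ++ Ep) V x0 else true
  else true.

Definition code_vertices (cp : seq nat) : seq nat := cycle_code ++ [seq x <- cp | 5 < x].

Definition exceptional_ok (cp : seq nat) : bool :=
  if (1 \in cp) && (5 \in cp) then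
    exceptional_check (edge_list (rcons cycle_code 0)) (edge_list cp) (code_vertices cp)
      (head 0 cp)
  else true.

(* The prefixes [0] and [6; 0] say that v = 0 is the first vertex of P on C, after at most one
   vertex off C; its C-neighbours 1 and 5 must both lie on P. *)
Lemma exceptional_codings :
  all_codings exceptional_ok 6 [:: 0] && all_codings exceptional_ok 5 [:: 6; 0].
Proof. by vm_compute. Qed.

Lemma mem_code_vertices cp x : (x \in code_vertices cp) = (x \in cycle_code ++ cp).
Proof. by rewrite !mem_cat mem_filter mem_iota /=; case: ltnP. Qed.

Section ExceptionalCase.
Variables (T : eqType) (v w : T) (b pre suf : seq T).
Local Notation c := (v :: w :: b).
Local Notation p := (pre ++ v :: suf).
Hypothesis adm : admissible 3 c p.
Hypothesis pre_c : ~~ has (mem c) pre.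
Hypothesis pre1 : size pre <= 1.

Let verts := c ++ p.
Let code (x : T) : nat := index x verts.
Let decode (i : nat) : T := nth v verts i.
Let cp := map code p.
Let Ec := edge_list (rcons cycle_code 0).
Let Ep := edge_list cp.
Let V := code_vertices cp.

Fact cycle_facts : uniq c /\ size c = 6.
Proof. by case: adm => /andP[/andP[-> /eqP->]]. Qed.

Fact path_facts : uniq p /\ size p = 7.
Proof. by case: adm => _ /andP[-> /eqP->]. Qed.

Lemma code_inj : {in verts &, injective code}.
Proof. by move=> x y xS yS /(congr1 decode); rewrite /decode !nth_index. Qed.

Lemma codeK : {in verts, cancel code decode}.
Proof. by move=> x xS; rewrite /decode nth_index. Qed.

Lemma code_cycle : map code c = cycle_code.
Proof.
have [c_uniq c_size] := cycle_facts.
apply: (@eq_from_nth _ 0) => [|i]; rewrite size_map c_size // => i_lt.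
rewrite (nth_map v) ?c_size // nth_iota // /code index_cat mem_nth ?c_size //.
by rewrite index_uniq ?c_size.
Qed.

Lemma code_path_choice j : j < 7 -> code (nth v p j) \in code_choices j.
Proof.
have [[c_uniq c_size] [p_uniq p_size]] := (cycle_facts, path_facts).
move=> j_lt; rewrite /code index_cat mem_rcons inE; case: ifP => [xc | _].
  by rewrite /cycle_code mem_iota leq0n add0n -c_size index_mem xc orbT.
by rewrite index_uniq ?p_size // c_size addnC eqxx.
Qed.

Lemma exceptional_code_path : exceptional_ok cp.
Proof.
have [[c_uniq c_size] [p_uniq p_size]] := (cycle_facts, path_facts).
have from_prefix s : map code (rcons pre v) = s ->
    all_codings exceptional_ok (size suf) s -> exceptional_ok cp.
  move=> pre_code codings; rewrite /cp -cat_rcons map_cat pre_code.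
  apply: (all_codingsP codings); rewrite ?size_map // -?pre_code.
    move=> i i_lt; rewrite size_map size_rcons (nth_map v) // addSnnS.
    have -> : nth v suf i = nth v p (size pre + i.+1).
      by rewrite nth_cat ltnNge leq_addr addKn.
    by apply: code_path_choice; move: p_size; rewrite size_cat /=; clear -i_lt; lia.
  rewrite -map_cat cat_rcons map_inj_in_uniq // => x y xp yp.
  by apply: code_inj; rewrite mem_cat ?xp ?yp orbT.
have code_v : code v = 0 by rewrite /code /= eqxx.
case/andP: exceptional_codings => codings0 codings1.
have [pre_nil | [x pre_x]] : pre = [::] \/ exists x, pre = [:: x].
  by case: (pre) pre1 => [|x [|]]; [left | right; exists x |].
- apply: (from_prefix [:: 0]); first by rewrite pre_nil /= code_v.
  by move: p_size; rewrite pre_nil => -[->].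
- apply: (from_prefix [:: 6; 0]); last by move: p_size; rewrite pre_x => -[->].
  have x_c : x \notin c by apply: (hasPn pre_c); rewrite pre_x mem_head.
  rewrite pre_x /= code_v /code index_cat (negbTE x_c) pre_x /= eqxx addn0.
  by case: c_size => ->.
Qed.

Lemma mem_V_code y : y \in V -> exists2 x, x \in verts & y = code x.
Proof. by rewrite mem_code_vertices -code_cycle -map_cat => /mapP. Qed.

Lemma code_in_V x : x \in verts -> code x \in V.
Proof. by move=> xS; rewrite mem_code_vertices -code_cycle -map_cat map_f. Qed.

Lemma union_edge_mem x y : union_edge c p x y -> (x \in verts) && (y \in verts).
Proof.
case/orP=> [/cycle_edge_mem | /path_edge_mem] /andP[xs ys].
  by rewrite /verts !(mem_cat _ c) xs ys.
by rewrite /verts !(mem_cat _ c) xs ys !orbT.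
Qed.

Lemma union_edge_neq x y : union_edge c p x y -> x != y.
Proof.
have [[c_uniq c_size] [p_uniq _]] := (cycle_facts, path_facts).
by case/orP=> [/cycle_edge_neq | /path_edge_neq]; apply; rewrite ?c_size.
Qed.

Lemma adjacent_code x y : x \in verts -> y \in verts ->
  adjacent Ec (code x) (code y) = cycle_edge c x y /\
  adjacent Ep (code x) (code y) = path_edge p x y.
Proof.
move=> xS yS; split.
  have -> : adjacent Ec (code x) (code y) = cycle_edge cycle_code (code x) (code y) by [].
  by rewrite -code_cycle (cycle_edge_map_in code_inj) // => z zc; rewrite /verts mem_cat zc.
by apply: (path_edge_map_in code_inj) => // z zp; rewrite /verts mem_cat zp orbT.
Qed.

Lemma union_edge_code x y : x \in verts -> y \in verts ->
  adjacent (Ec ++ Ep) (code x) (code y) = union_edge c p x y.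
Proof.
by move=> xS yS; rewrite /union_edge; case: (adjacent_code xS yS) => <- <-; apply: has_cat.
Qed.

Lemma code_edge_disjoint : edge_disjoint_on cycle_code Ec Ep.
Proof.
have [_ _ CP_disj _] := adm.
apply/allP=> x'; rewrite -code_cycle => /mapP[x xc ->]; apply/allP=> _ /mapP[y yc ->].
have [xS yS] : x \in verts /\ y \in verts by rewrite /verts !(mem_cat _ c) xc yc.
by case: (adjacent_code xS yS) => -> ->.
Qed.

Lemma code_triangle_free : triangle_free (Ec ++ Ep) V.
Proof.
have [_ _ _ girth] := adm.
apply/allP=> _ /mem_V_code[x xS ->]; apply/allP=> _ /mem_V_code[y yS ->].
rewrite union_edge_code //; case: ifP => // xy; apply/allP=> _ /mem_V_code[z zS ->].
rewrite !union_edge_code //; apply/negP=> /andP[yz zx].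
suff : 2 * 3 - 2 <= 3 by [].
apply: (girth [:: x; y; z]) => [|a a'].
  rewrite /is_cycle /= !inE !negb_or (union_edge_neq xy) (union_edge_neq yz) eq_sym.
  by rewrite (union_edge_neq zx).
rewrite cycle_edge_cons /= !path_edge_cons orbF.
by case/or3P=> /sedge_rel; apply=> //; apply: union_edge_sym.
Qed.

Lemma decode_codes s :
  all (mem V) s -> map code (map decode s) = s /\ {subset map decode s <= verts}.
Proof.
move=> /allP sV; split.
  rewrite -map_comp -[RHS]map_id; apply/eq_in_map => _ /sV /mem_V_code[x xS ->].
  by rewrite /= codeK.
by move=> _ /mapP[_ /sV /mem_V_code[x xS ->] ->]; rewrite codeK.
Qed.

Lemma is_path_decode s : all (mem V) s -> size s \in [:: 6; 7; 8] -> uniq s ->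
  is_path (map decode s) (size s).-1.
Proof.
move=> /decode_codes[s_code _] s_size s_uniq; rewrite /is_path size_map.
rewrite prednK; last by move: s_size; rewrite !inE => /or3P[]/eqP->.
by rewrite eqxx andbT; apply: (@map_uniq _ _ code); rewrite s_code.
Qed.

Lemma decomposable_of_code s1 s2 :
  is_decomposition (Ec ++ Ep) V s1 s2 -> decomposable 3 c p.
Proof.
rewrite /is_decomposition; case: ifP => //.
case/and5P=> size1 size2 uniq1 uniq2 /andP[V1 V2] /allP edges_ok.
have [[code1 S1] [code2 S2]] := (decode_codes V1, decode_codes V2).
have edges_code x y : x \in verts -> y \in verts ->
    (union_edge c p x y = path_edge (map decode s1) x y || path_edge (map decode s2) x y) /\
    ~~ (path_edge (map decode s1) x y && path_edge (map decode s2) x y).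
  move=> xS yS.
  have /allP/(_ _ (code_in_V yS))/andP[/eqP E D] := edges_ok _ (code_in_V xS).
  have pe_code s : map code (map decode s) = s -> {subset map decode s <= verts} ->
      path_edge s (code x) (code y) = path_edge (map decode s) x y.
    by move=> s_code sS; rewrite -{1}s_code (path_edge_map_in code_inj).
  by rewrite -union_edge_code // E -(pe_code _ code1 S1) -(pe_code _ code2 S2).
exists (map decode s1), (map decode s2), (size s1).-1, (size s2).-1; split.
- by split; apply: is_path_decode.
- by move: size1; rewrite !inE => /or3P[]/eqP->.
- by move: size2; rewrite !inE => /or3P[]/eqP->.
- move=> x y; have [/andP[xS yS] | xyS] := boolP ((x \in verts) && (y \in verts)).
    by case: (edges_code x y xS yS).
  have in_verts q : {subset q <= verts} -> path_edge q x y -> (x \in verts) && (y \in verts).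
    by move=> qS /path_edge_mem/andP[/qS-> /qS->].
  rewrite (contraNF (@union_edge_mem x y) xyS).
  by rewrite (contraNF (in_verts _ S1) xyS) (contraNF (in_verts _ S2) xyS).
- move=> x y; have [/andP[xS yS] | xyS] := boolP ((x \in verts) && (y \in verts)).
    by case: (edges_code x y xS yS).
  by apply: contra xyS => /andP[/path_edge_mem/andP[/S1-> /S1->]].
Qed.

Lemma decomposable_exceptional : w \in p -> last w b \in p -> decomposable 3 c p.
Proof.
have [[c_uniq c_size] [p_uniq p_size]] := (cycle_facts, path_facts).
move=> wp zp; have := exceptional_code_path; rewrite /exceptional_ok.
have code_c i : i < 6 -> code (nth v c i) = i.
  by move=> i_lt; rewrite /code index_cat mem_nth ?c_size // index_uniq ?c_size.
have -> : 1 \in cp by apply/mapP; exists w; rewrite // -(code_c 1).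
have -> : 5 \in cp.
  apply/mapP; exists (last w b); rewrite // -(code_c 5) //.
  by rewrite (_ : 5 = (size c).-1) ?nth_last // c_size.
rewrite /= /exceptional_check code_edge_disjoint code_triangle_free.
by case/hasP=> s1 _; apply: decomposable_of_code.
Qed.

End ExceptionalCase.

Section Reduction.
Variable T : eqType.
Implicit Types (c p pre suf cs : seq T) (k : nat) (v : T).

Lemma decomposable_short_prefix k v cs pre suf :
  2 < k -> admissible k (v :: cs) (pre ++ v :: suf) -> ~~ has (mem (v :: cs)) pre ->
  size pre <= 1 -> decomposable k (v :: cs) (pre ++ v :: suf).
Proof.
set p := pre ++ _ => k_gt2 adm pre_c pre1.
have [/andP[/andP[c_uniq /eqP c_size] _] _ _ _] := adm.
case: cs adm pre_c c_uniq c_size => [|w b] adm pre_c c_uniq c_size.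
  by move: c_size => /=; clear -k_gt2; lia.
have [wp | w_p] := boolP (w \in p); last exact: decomposable_next_off_path.
set z := last w b.
have [zp | z_p] := boolP (z \in p); last first.
  have flip x y := esym (cycle_edge_rev_tail v (w :: b) x y).
  have c_perm : perm_eq (v :: w :: b) (v :: rev (w :: b)).
    by rewrite perm_cons perm_sym perm_rev.
  have adm' := admissible_cycle_eq c_perm flip adm.
  have pre_c' : ~~ has (mem (v :: rev (w :: b))) pre by rewrite -(eq_has (perm_mem c_perm)).
  apply: decomposable_cycle_eq flip _; move: adm' pre_c'.
  rewrite [w :: b]lastI rev_rcons => adm' pre_c'.
  exact: decomposable_next_off_path adm' pre_c' pre1 z_p.
have [k3 | k_gt3] : k = 3 \/ 3 < k by lia.
  by subst k; apply: decomposable_exceptional.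
by case/negP: (cycle_neighbours_not_both_on_path k_gt3 adm pre_c wp).
Qed.

Lemma decomposable_oriented k c p : 2 < k -> admissible k c p -> has (mem c) p ->
  find (mem c) p <= find (mem c) (rev p) -> decomposable k c p.
Proof.
move=> k_gt2 adm cp; move: cp adm; case/split_find=> v pre suf vc pre_c.
rewrite cat_rcons => adm.
have vc' : v \in c := vc.
rewrite find_cat (negbTE pre_c) /= vc' addn0 => orient.
have [c1 [c2 c_eq]] : exists c1 c2, c = c1 ++ v :: c2.
  by case/splitPr: vc' => c1 c2; exists c1, c2.
have rot_c : rot (size c1) c = v :: c2 ++ c1 by rewrite c_eq rot_size_cat.
have c_edges x y : cycle_edge c x y = cycle_edge (v :: c2 ++ c1) x y.
  by rewrite -rot_c cycle_edge_rot.
have c_mem : c =i v :: c2 ++ c1 by move=> x; rewrite -rot_c mem_rot.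
have c_perm : perm_eq c (v :: c2 ++ c1) by rewrite -rot_c perm_sym perm_rot.
have {}adm := admissible_cycle_eq c_perm c_edges adm.
apply: decomposable_cycle_eq c_edges _.
rewrite (eq_has c_mem) in pre_c; rewrite (eq_find c_mem) in orient.
have [pre1 | pre_gt1] := leqP (size pre) 1.
  exact: decomposable_short_prefix.
exact: decomposable_long_prefix.
Qed.

End Reduction.

Theorem mainTheorem8 (T : eqType) (k : nat) (c p : seq T) :
  3 <= k ->
  is_cycle c (2 * k) ->
  is_path p (2 * k) ->
  (* E(C) and E(P) are disjoint *)
  (forall x y, ~~ (cycle_edge c x y && path_edge p x y)) ->
  (* V(C) and V(P) intersect *)
  has (fun v => v \in p) c ->
  (* H = C ∪ P has girth at least 2k-2: every cycle contained in H has length >= 2k-2 *)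
  (forall (d : seq T) (m : nat), is_cycle d m ->
     (forall x y, cycle_edge d x y -> cycle_edge c x y || path_edge p x y) ->
     2 * k - 2 <= m) ->
  (* H decomposes into two paths with lengths in {2k-1, 2k, 2k+1} *)
  exists (q1 q2 : seq T) (l1 l2 : nat),
    [/\ is_path q1 l1 /\ is_path q2 l2,
        l1 \in [:: 2 * k - 1; 2 * k; 2 * k + 1],
        l2 \in [:: 2 * k - 1; 2 * k; 2 * k + 1],
        (forall x y, (cycle_edge c x y || path_edge p x y) =
                     (path_edge q1 x y || path_edge q2 x y)) &
        (forall x y, ~~ (path_edge q1 x y && path_edge q2 x y))].
Proof.
move=> k_ge3 c_cycle p_path CP_disj /hasP[v vc vp] girth.
have adm : admissible k c p by split.
have cp : has (mem c) p by apply/hasP; exists v.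
suff : decomposable k c p by [].
have [orient | /ltnW orient] := leqP (find (mem c) p) (find (mem c) (rev p)).
  exact: decomposable_oriented.
apply/decomposable_rev/decomposable_oriented; rewrite ?revK ?has_rev //.
exact: admissible_rev.
Qed.
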